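(* Let $n\ge 2$. The set $\mathcal B=\{[in|jn] : i,j\in[n-1]\}$ is a lattice basis of the Veronese lattice $L_n=\ker_{\mathbb{Z}}(V_n)\subset\mathbb{Z}^{\binom{n+1}{2}}$.
   Context: $[n]=\{1,\dots,n\}$. $\mathbb{Z}^{\binom{n+1}{2}}$ has standard basis $e_{ij}$, $1\le i\le j\le n$, with the convention $e_{ij}=e_{ji}$. For $i,j,k,l\in[n]$, $[ij|kl]:=e_{ik}+e_{jl}-e_{il}-e_{jk}$ (note $[in|jn]=[jn|in]$). $V_n$ is the $n\times\binom{n+1}{2}$ integer matrix whose column indexed by $jk$ is $e_j+e_k\in\mathbb{Z}^n$. *)

From mathcomp Require Import all_boot all_order all_algebra.
Set Implicit Arguments. Unset Strict Implicit. Unset Printing Implicit Defensive.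
Import Order.TTheory GRing.Theory Num.Theory.
Local Open Scope ring_scope.

(* Coordinates of Z^{binom(n+1,2)}: unordered pairs {j,k} of elements of
   [n] (here 0-based 'I_n), represented as (j,k) with j <= k. *)
Definition idx (n : nat) := {p : 'I_n * 'I_n | (p.1 <= p.2)%N}.

Definition vec (n : nat) := {ffun idx n -> int}.

Definition npair n (i j : 'I_n) : 'I_n * 'I_n :=
  if (i <= j)%N then (i, j) else (j, i).

Definition e n (i j : 'I_n) : vec n :=
  [ffun p : idx n => ((val p == npair i j) : nat)%:Z].

(* [ij|kl] := e_ik + e_jl - e_il - e_jk *)
Definition bracket n (i j k l : 'I_n) : vec n :=
  e i k + e j l - e i l - e j k.

(* V_n v, where the column of V_n indexed by jk is e_j + e_k *)
Definition Vn n (v : vec n) : 'I_n -> int := fun m =>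
  \sum_(p : idx n) ((((val p).1 == m) : nat)%:Z + (((val p).2 == m) : nat)%:Z) * v p.

Definition veronese_lattice (n : nat) : pred (vec n) := fun v => [forall m, Vn v m == 0].

Definition lattice_basis n (S : vec n -> Prop) (L : pred (vec n)) : Prop :=
  [/\ (forall v, S v -> L v),
      (forall v, L v -> exists (s : seq (vec n)) (c : vec n -> int),
          [/\ uniq s, (forall b, b \in s -> S b) & v = \sum_(b <- s) (b *~ c b)])
    & (forall (s : seq (vec n)) (c : vec n -> int),
          uniq s -> (forall b, b \in s -> S b) ->
          \sum_(b <- s) (b *~ c b) = 0 -> forall b, b \in s -> c b = 0)].

Lemma lastI_subproof n : (1 < n)%N -> (n.-1 < n)%N.
Proof. by case: n. Qed.

(* the element n of [n], i.e. index n-1 of 'I_n *)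
Definition lastI n (hn : (1 < n)%N) : 'I_n := Ordinal (lastI_subproof hn).

Definition Bset n (hn : (1 < n)%N) : vec n -> Prop := fun v =>
  exists i j : 'I_n, [/\ (i < n.-1)%N, (j < n.-1)%N & v = bracket i (lastI hn) j (lastI hn)].

From Pilot Require Import Defs.
From mathcomp Require Import all_boot all_order all_algebra.
From mathcomp Require Import zify.
Set Implicit Arguments. Unset Strict Implicit. Unset Printing Implicit Defensive.
Import Order.TTheory GRing.Theory Num.Theory.
Local Open Scope ring_scope.

(* Let l be the last index.  A kernel vector w that vanishes on every
   coordinate e_ab with a, b < l is zero: the row m < l of V_n w then reduces
   to w_ml, and after that the row l reduces to 2 w_ll.  The vectors [al|bl]
   with a <= b < l restrict to the standard basis on exactly these
   coordinates, so v = sum_(a <= b < l) v_ab [al|bl] for every kernel vector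
   v, and the coefficients of a relation can be read off coordinatewise. *)

Lemma sum_delta_seq (T : eqType) (s : seq T) (x : T) (F : T -> int) :
  uniq s -> x \in s -> \sum_(y <- s) ((y == x) : nat)%:Z * F y = F x.
Proof.
move=> uniq_s s_x; rewrite (big_rem x) //= eqxx mul1r big1_seq ?addr0 //.
by move=> y /andP[_]; rewrite mem_rem_uniq // => /andP[/negbTE -> _]; rewrite mul0r.
Qed.

Lemma sum_delta_pred (I : finType) (P : pred I) (x : I) (F : I -> int) :
  P x -> \sum_(y | P y) ((y == x) : nat)%:Z * F y = F x.
Proof.
move=> Px; rewrite (bigD1 x) //= eqxx mul1r big1 ?addr0 //.
by move=> y /andP[_ /negbTE ->]; rewrite mul0r.
Qed.

Section VeroneseMap.
Variable n : nat.
Implicit Types (v w : vec n) (p q : idx n) (i j m : 'I_n).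

Definition incidence p m : int :=
  (((val p).1 == m) : nat)%:Z + (((val p).2 == m) : nat)%:Z.

Lemma VnE v m : Vn v m = \sum_p incidence p m * v p.
Proof. by []. Qed.

Lemma veronese_latticeP v : reflect (forall m, Vn v m = 0) (veronese_lattice v).
Proof. by apply: (iffP forallP) => Vv0 m; apply/eqP. Qed.

Lemma VnD v w m : Vn (v + w) m = Vn v m + Vn w m.
Proof.
rewrite !VnE -big_split; apply: eq_bigr => p _.
by rewrite !ffunE mulrDr.
Qed.

Lemma VnB v w m : Vn (v - w) m = Vn v m - Vn w m.
Proof.
rewrite !VnE -sumrB; apply: eq_bigr => p _.
by rewrite !ffunE mulrBr.
Qed.

Lemma VnMz v z m : Vn (v *~ z) m = Vn v m * z.
Proof.
by rewrite !VnE mulr_suml; apply: eq_bigr => p _; rewrite ffunMzE mulrzz mulrA.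
Qed.

Lemma Vn_sum (I : Type) (r : seq I) (P : pred I) (F : I -> vec n) m :
  Vn (\sum_(b <- r | P b) F b) m = \sum_(b <- r | P b) Vn (F b) m.
Proof.
rewrite VnE; under eq_bigr do rewrite sum_ffunE big_distrr.
by rewrite exchange_big.
Qed.

Lemma npair_le i j : ((npair i j).1 <= (npair i j).2)%N.
Proof. by rewrite /npair; case: ifP => //= /negbT; rewrite -ltnNge => /ltnW. Qed.

Definition idx_of i j : idx n := exist _ (npair i j) (npair_le i j).

Lemma e_idx_ofE i j p : e i j p = ((p == idx_of i j) : nat)%:Z.
Proof. by rewrite ffunE. Qed.

Lemma idx_eqE p q : (p == q) = ((val p).1 == (val q).1) && ((val p).2 == (val q).2).
Proof. by []. Qed.

Lemma idx_of_val p : idx_of (val p).1 (val p).2 = p.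
Proof. by apply: val_inj; rewrite /= /npair (valP p); case: (val p). Qed.

Lemma eC i j : e i j = e j i.
Proof.
rewrite /e /npair; case: (leqP i j) => [le_ij|lt_ji]; case: (leqP j i) => //.
- by move=> le_ji; have -> : i = j by apply/val_inj/eqP; rewrite eqn_leq le_ij le_ji.
- by move=> lt_ij; move: (ltn_trans lt_ij lt_ji); rewrite ltnn.
Qed.

Lemma bracket_swap i j k l : bracket i j k l = bracket k l i j.
Proof. by rewrite /bracket (eC i k) (eC j l) (eC i l) (eC j k) addrAC. Qed.

Lemma bracketE i j k h p : bracket i j k h p = e i k p + e j h p - e i h p - e j k p.
Proof. by rewrite !ffunE. Qed.

Lemma Vn_e i j m : Vn (e i j) m = ((i == m) : nat)%:Z + ((j == m) : nat)%:Z.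
Proof.
rewrite VnE (bigD1 (idx_of i j)) //= big1 => [|p ne_p]; last first.
  by rewrite e_idx_ofE (negbTE ne_p) mulr0.
rewrite e_idx_ofE eqxx mulr1 addr0 /incidence /= /npair.
by case: ifP => _ //=; rewrite addrC.
Qed.

Lemma Vn_bracket i j k l m : Vn (bracket i j k l) m = 0.
Proof. by rewrite /bracket !(VnB, VnD, Vn_e); lia. Qed.

Lemma Vn_single w m p0 :
  (forall p, p != p0 -> incidence p m != 0 -> w p = 0) ->
  Vn w m = incidence p0 m * w p0.
Proof.
move=> w0; rewrite VnE (bigD1 p0) //= big1 ?addr0 // => p ne_p.
by have [->|/w0 -> //] := eqVneq (incidence p m) 0; rewrite ?mul0r ?mulr0.
Qed.

End VeroneseMap.

Section LatticeBasis.
Variables (n : nat) (hn : (1 < n)%N).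
Implicit Types (v w b : vec n) (p q : idx n) (i j m : 'I_n).
Local Notation l := (Defs.lastI hn).

Lemma le_last i : (i <= l)%N.
Proof. by have := ltn_ord i; rewrite /=; lia. Qed.

Lemma le_lastE i : (l <= i)%N -> i = l.
Proof. by move=> le_li; apply/val_inj/eqP; rewrite eqn_leq le_li le_last. Qed.

Lemma lt_last i : (i < n.-1)%N = (i != l).
Proof. by rewrite ltn_neqAle le_last andbT. Qed.

Definition upper p := (val p).2 != l.

Lemma upperN p : ~~ upper p -> (val p).2 = l.
Proof. by move/negPn/eqP. Qed.

Lemma e_last_upper i p : upper p -> e i l p = 0.
Proof.
move=> up; rewrite e_idx_ofE idx_eqE /= /npair le_last /=.
by rewrite (negbTE up) andbF.
Qed.

Definition Bvec q : vec n := bracket (val q).1 l (val q).2 l.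

Lemma Bvec_upper q p : upper p -> Bvec q p = ((q == p) : nat)%:Z.
Proof.
move=> up; rewrite bracketE (eC l) !e_last_upper //.
by rewrite e_idx_ofE idx_of_val eq_sym !subr0 ?addr0.
Qed.

Lemma Bvec_inj : {in upper &, injective Bvec}.
Proof.
move=> q q' _ uq' E; have := Bvec_upper q' uq'.
by rewrite -E Bvec_upper // eqxx; case: eqP.
Qed.

Lemma Bset_Bvec q : upper q -> Bset hn (Bvec q).
Proof.
move=> uq; have q2_lt : ((val q).2 < n.-1)%N by rewrite lt_last.
by exists (val q).1, (val q).2; split=> //; apply: leq_ltn_trans (valP q) q2_lt.
Qed.

Lemma BsetP b : Bset hn b -> exists2 q, upper q & b = Bvec q.
Proof.
case=> i [j [lt_i lt_j ->]]; rewrite !lt_last in lt_i lt_j.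
exists (idx_of i j); rewrite /upper /Bvec /= /npair; case: ifP => //= _.
by rewrite bracket_swap.
Qed.

Lemma Bset_coord q b : upper q -> Bset hn b -> b q = ((b == Bvec q) : nat)%:Z.
Proof.
move=> uq /BsetP[q' uq' ->]; rewrite Bvec_upper //.
have [-> | ne_q] := eqVneq q' q; first by rewrite !eqxx.
by case: eqP => // /Bvec_inj E; case/eqP: ne_q; apply: E.
Qed.

Lemma kernel_upper_eq0 w : (forall m, Vn w m = 0) ->
  (forall p, upper p -> w p = 0) -> w = 0.
Proof.
move=> Vw0 w_upper.
have w_last p : (val p).1 != l -> w p = 0.
  move=> p1; have [/w_upper // | /upperN p2] := boolP (upper p).
  have := Vw0 (val p).1; rewrite (@Vn_single _ _ _ p) => [|q ne_qp].
    by rewrite /incidence eqxx p2 eq_sym (negbTE p1) mul1r.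
  have [/w_upper // | /upperN q2] := boolP (upper q).
  rewrite /incidence q2 [l == _]eq_sym (negbTE p1) addr0.
  case: ((val q).1 =P (val p).1) => // q1 _.
  by move: ne_qp; rewrite idx_eqE q1 q2 p2 !eqxx.
apply/ffunP => p; rewrite ffunE.
have [/w_last // | /negPn/eqP p1] := boolP ((val p).1 != l).
have p2 : (val p).2 = l by apply: le_lastE; rewrite -p1 (valP p).
have := Vw0 l; rewrite (@Vn_single _ _ _ p) => [|q ne_qp _].
  by rewrite /incidence p1 p2 eqxx => /eqP; rewrite mulf_eq0 => /orP[|/eqP].
have [/w_last // | /negPn/eqP q1] := boolP ((val q).1 != l).
have q2 : (val q).2 = l by apply: le_lastE; rewrite -q1 (valP q).
by move: ne_qp; rewrite idx_eqE q1 q2 p1 p2 !eqxx.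
Qed.

Lemma kernel_expand v : (forall m, Vn v m = 0) ->
  v = \sum_(q | upper q) Bvec q *~ v q.
Proof.
move=> Vv0; apply/eqP; rewrite -subr_eq0; apply/eqP/kernel_upper_eq0 => [m|p up].
  rewrite VnB Vn_sum Vv0 big1 ?subrr // => q _.
  by rewrite VnMz Vn_bracket mul0r.
rewrite !ffunE sum_ffunE.
under eq_bigr => q _ do rewrite ffunMzE mulrzz Bvec_upper //.
by rewrite sum_delta_pred ?subrr.
Qed.

Definition upper_coord v b : int := \sum_(p | upper p) b p * v p.

Lemma upper_coord_Bvec v q : upper q -> upper_coord v (Bvec q) = v q.
Proof.
move=> uq; rewrite /upper_coord.
under eq_bigr => p up do rewrite Bvec_upper // eq_sym.
exact: sum_delta_pred.
Qed.

End LatticeBasis.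

Theorem lemma2p1 (n : nat) (hn : (1 < n)%N) :
  @lattice_basis n (Bset hn) (@veronese_lattice n).
Proof.
split.
- by move=> v [i [j [_ _ ->]]]; apply/veronese_latticeP => m; apply: Vn_bracket.
- move=> v /veronese_latticeP Vv0.
  exists (map (Bvec hn) (enum (upper hn))), (upper_coord hn v); split.
  + by rewrite map_inj_in_uniq ?enum_uniq // => q q'; rewrite !mem_enum; apply: Bvec_inj.
  + by move=> b /mapP[q]; rewrite mem_enum => uq ->; apply: Bset_Bvec.
  + rewrite big_map big_enum {1}(kernel_expand hn Vv0).
    by apply: eq_big => // q uq; rewrite upper_coord_Bvec.
- move=> s c uniq_s sB sum0 b b_s.
  have [q uq Eb] := BsetP (sB b b_s).
  have := congr1 (fun w : vec n => w q) sum0; rewrite /= sum_ffunE ffunE.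
  rewrite (eq_big_seq (fun b' => ((b' == b) : nat)%:Z * c b')) => [|b' b'_s].
    by rewrite sum_delta_seq.
  by rewrite ffunMzE mulrzz (Bset_coord uq (sB b' b'_s)) Eb.
Qed.
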